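(* Let $(M,g)$ be a four-dimensional spacetime with signature $(+,-,-,-)$, let $X_{abcd}$ be an arbitrary $(2,2)$ double form at a point ($X_{abcd}=-X_{bacd}=-X_{abdc}$), and let $t^q$ be a vector at that point with $t_mt^m\neq0$. Define the left, right and double duals $\overleftarrow{\star}X_{abcd}=\tfrac12\varepsilon_{ab}{}^{pq}X_{pqcd}$, $\overrightarrow{\star}X_{abcd}=\tfrac12\varepsilon_{cd}{}^{pq}X_{abpq}$, $\overleftrightarrow{\star}X_{abcd}=\tfrac14\varepsilon_{ab}{}^{pq}\varepsilon_{cd}{}^{rs}X_{pqrs}$, and the tensors $$\mathfrak A_{ac}=X_{abcd}t^bt^d,\quad \mathfrak B_{ac}=-\overrightarrow{\star}X_{abcd}t^bt^d,\quad \mathfrak C_{ac}=-\overleftarrow{\star}X_{abcd}t^bt^d,\quad \mathfrak D_{ac}=\overleftrightarrow{\star}X_{abcd}t^bt^d.$$ Then $$X_{abcd}=\frac{\big\{g_{abpq}\big(g_{cdrs}\mathfrak A^{pr}+\varepsilon_{cdrs}\mathfrak B^{pr}\big)+\varepsilon_{abpq}\big(g_{cdrs}\mathfrak C^{pr}+\varepsilon_{cdrs}\mathfrak D^{pr}\big)\big\}t^qt^s}{(t_mt^m)^2},$$ where $g_{abcd}=g_{ac}g_{bd}-g_{ad}g_{bc}$.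
   Context: The Levi-Civita tensors are $\varepsilon_{abcd}=\sqrt{-\det g}\,[abcd]$, $\varepsilon^{abcd}=-[abcd]/\sqrt{-\det g}$ with $[0123]=+1$, so that $\varepsilon^{a_1\dots a_4}\varepsilon_{b_1\dots b_4}=-\delta^{a_1\dots a_4}_{b_1\dots b_4}$ (generalized Kronecker delta). Indices are raised and lowered with $g$. *)

(* Tensors at a point of a 4-dim spacetime, written in
   components w.r.t. an arbitrary basis; indices range over 'I_4. *)
From HB Require Import structures.
From mathcomp Require Import all_boot all_order all_algebra.
Set Implicit Arguments. Unset Strict Implicit. Unset Printing Implicit Defensive.
Import Order.TTheory GRing.Theory Num.Theory.
Local Open Scope ring_scope.

Section Tensors.
Variable R : rcfType.

Definition metric := 'M[R]_4.

Definition lorentzian (g : metric) : Prop :=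
  g^T = g /\
  exists P : 'M[R]_4, P \in unitmx /\
    P^T *m g *m P = diag_mx (\row_(i < 4) (if i == 0 then 1 else -1)).

Definition ginv (g : metric) : 'M[R]_4 := invmx g.

(* permutation symbol [abcd] with [0123] = +1 : determinant of the matrix
   whose rows are the standard basis vectors e_a, e_b, e_c, e_d *)
Definition idx4 (a b c d : 'I_4) (i : 'I_4) : 'I_4 :=
  if i == 0 :> nat then a else if i == 1 :> nat then b
  else if i == 2 :> nat then c else d.
Definition perm_symbol (a b c d : 'I_4) : R :=
  \det (\matrix_(i < 4, j < 4) ((idx4 a b c d i == j)%:R : R)).

Definition epsL (g : metric) (a b c d : 'I_4) : R :=
  Num.sqrt (- \det g) * perm_symbol a b c d.
Definition epsU (g : metric) (a b c d : 'I_4) : R :=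
  - perm_symbol a b c d / Num.sqrt (- \det g).

Definition epsLLUU (g : metric) (a b p q : 'I_4) : R :=
  \sum_(r < 4) \sum_(s < 4) epsL g a b r s * ginv g r p * ginv g s q.

Definition g4 (g : metric) (a b c d : 'I_4) : R :=
  g a c * g b d - g a d * g b c.

Definition tensor4 := 'I_4 -> 'I_4 -> 'I_4 -> 'I_4 -> R.
Definition tensor2 := 'I_4 -> 'I_4 -> R.

Definition double_form (X : tensor4) : Prop :=
  (forall a b c d, X a b c d = - X b a c d) /\
  (forall a b c d, X a b c d = - X a b d c).

Definition left_dual (g : metric) (X : tensor4) : tensor4 :=
  fun a b c d => 2^-1 * \sum_(p < 4) \sum_(q < 4) epsLLUU g a b p q * X p q c d.
Definition right_dual (g : metric) (X : tensor4) : tensor4 :=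
  fun a b c d => 2^-1 * \sum_(p < 4) \sum_(q < 4) epsLLUU g c d p q * X a b p q.
Definition double_dual (g : metric) (X : tensor4) : tensor4 :=
  fun a b c d => 4^-1 * \sum_(p < 4) \sum_(q < 4) \sum_(r < 4) \sum_(s < 4)
    epsLLUU g a b p q * epsLLUU g c d r s * X p q r s.

Definition contract_t (Y : tensor4) (t : 'I_4 -> R) : tensor2 :=
  fun a c => \sum_(b < 4) \sum_(d < 4) Y a b c d * t b * t d.

Definition frakA (g : metric) X t : tensor2 := contract_t X t.
Definition frakB g X t : tensor2 := fun a c => - contract_t (right_dual g X) t a c.
Definition frakC g X t : tensor2 := fun a c => - contract_t (left_dual g X) t a c.
Definition frakD g X t : tensor2 := contract_t (double_dual g X) t.

Definition raise2 (g : metric) (T : tensor2) : tensor2 :=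
  fun p r => \sum_(a < 4) \sum_(c < 4) ginv g p a * ginv g r c * T a c.

Definition tsq (g : metric) (t : 'I_4 -> R) : R :=
  \sum_(m < 4) \sum_(n < 4) g m n * t m * t n.

End Tensors.

From HB Require Import structures.
From mathcomp Require Import all_boot all_order all_algebra.
From mathcomp Require Import ring.
Set Implicit Arguments. Unset Strict Implicit. Unset Printing Implicit Defensive.
Import Order.TTheory GRing.Theory Num.Theory.
Local Open Scope ring_scope.

(* Relative to t, an antisymmetric F_ab has the electric part E^p = g^pm F_mn t^n
   and the magnetic part B^p = -g^pm (hodge F)_mn t^n, and
     (t.t) F_ab = (g_abpq E^p + eps_abpq B^p) t^q.
   The g-term is immediate from g g^-1 = 1; the eps-term follows from the
   contraction eps_abpq eps^p_n^uv = -g_nk delta^{abq}_{kuv} (the sign is the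
   Lorentzian one, sqrt(-det g)^2 det g^-1 = -1).  Apply this to X in the pair
   (a,b), then again in the pair (c,d) to the coefficients E^p and B^p.  Since a
   dual on one index pair commutes with contractions on the other, the four
   resulting iterated parts are the raised A, B, C and D. *)

(* The permutation symbol as the parity of the inversions, so that identities
   between permutation symbols can be decided by evaluation. *)
Definition sgn4 (a b c d : nat) : int :=
  if uniq [:: a; b; c; d] then
    if odd ((a > b) + (a > c) + (a > d) + (b > c) + (b > d) + (c > d))%N
    then -1 else 1
  else 0.

Definition kdelta2 {T : eqType} {R : pzRingType} (x y u v : T) : R :=
  (x == u)%:R * (y == v)%:R - (x == v)%:R * (y == u)%:R.

Definition kdelta3 {T : eqType} {R : pzRingType} (a b q k u v : T) : R :=
  (a == k)%:R * kdelta2 b q u v - (b == k)%:R * kdelta2 a q u v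
  + (q == k)%:R * kdelta2 a b u v.

Lemma sgn4_contract (a b q k u v : 'I_4) :
  \sum_(p < 4) sgn4 a b p q * sgn4 p k u v = kdelta3 (a : nat) b q k u v.
Proof.
have check : all (fun a => all (fun b => all (fun q => all (fun k =>
    all (fun u => all (fun v =>
      sgn4 a b 0 q * sgn4 0 k u v + sgn4 a b 1 q * sgn4 1 k u v
      + sgn4 a b 2 q * sgn4 2 k u v + sgn4 a b 3 q * sgn4 3 k u v
      == kdelta3 a b q k u v) (iota 0 4)) (iota 0 4)) (iota 0 4)) (iota 0 4))
      (iota 0 4)) (iota 0 4).
  by vm_compute.
have mem4 (x : 'I_4) : (x : nat) \in iota 0 4 by rewrite mem_iota ltn_ord.
rewrite !big_ord_recl big_ord0 addr0 !addrA; apply/eqP.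
by move: check => /allP/(_ _ (mem4 a))/allP/(_ _ (mem4 b))/allP/(_ _ (mem4 q))
  /allP/(_ _ (mem4 k))/allP/(_ _ (mem4 u))/allP/(_ _ (mem4 v)).
Qed.

Lemma sum_delta_l (R : pzSemiRingType) (I : finType) (x : I) (F : I -> R) :
  \sum_i (x == i)%:R * F i = F x.
Proof.
rewrite (bigD1 x) //= eqxx mul1r big1 ?addr0 // => i /negPf.
by rewrite eq_sym => ->; rewrite mul0r.
Qed.

Lemma sum_kdelta2 (R : comPzRingType) (I : finType) (F : I -> I -> R) (x y : I) :
  \sum_u \sum_v F u v * kdelta2 x y u v = F x y - F y x.
Proof.
have sum_delta2 z w : F z w = \sum_u \sum_v (z == u)%:R * (w == v)%:R * F u v.
  rewrite -[LHS](sum_delta_l z (fun u => F u w)); apply: eq_bigr => u _.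
  rewrite -(sum_delta_l w (F u)) big_distrr /=.
  by apply: eq_bigr => v _; rewrite mulrA.
rewrite !sum_delta2 -sumrB; apply: eq_bigr => u _.
by rewrite -sumrB; apply: eq_bigr => v _; rewrite /kdelta2; ring.
Qed.

Section PermSymbol.
Variable R : rcfType.

Lemma perm_symbol_eq0 (a b c d : 'I_4) :
  ~~ uniq [:: a; b; c; d] -> perm_symbol R a b c d = 0.
Proof.
have alt (i j : 'I_4) : i != j -> idx4 a b c d i = idx4 a b c d j ->
    perm_symbol R a b c d = 0.
  by move=> neq_ij eq_ij; rewrite /perm_symbol (determinant_alternate neq_ij)
    // => k; rewrite !mxE eq_ij.
move=> not_uniq.
have [e|n_ab] := eqVneq a b; first by apply: (alt 0 1).
have [e|n_ac] := eqVneq a c; first by apply: (alt 0 2).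
have [e|n_ad] := eqVneq a d; first by apply: (alt 0 3).
have [e|n_bc] := eqVneq b c; first by apply: (alt 1 2).
have [e|n_bd] := eqVneq b d; first by apply: (alt 1 3).
have [e|n_cd] := eqVneq c d; first by apply: (alt 2 3).
by move: not_uniq; rewrite /= !inE (negPf n_ab) (negPf n_ac) (negPf n_ad)
  (negPf n_bc) (negPf n_bd) (negPf n_cd).
Qed.

Lemma perm_symbolE (a b c d : 'I_4) :
  perm_symbol R a b c d = (sgn4 a b c d)%:~R.
Proof.
have [uniq_abcd|not_uniq] := boolP (uniq [:: a; b; c; d]); last first.
  by rewrite perm_symbol_eq0 // /sgn4 ifN.
move: uniq_abcd; rewrite /perm_symbol.
case: a => [[|[|[|[|//]]]] ?]; case: b => [[|[|[|[|//]]]] ?];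
case: c => [[|[|[|[|//]]]] ?]; case: d => [[|[|[|[|//]]]] ?] => //= _;
do 3 rewrite (expand_det_row _ ord0) !big_ord_recl big_ord0 /cofactor !mxE /=
  ?(mul0r, mulr0, add0r, addr0);
by rewrite !det_mx11 !mxE /bump /sgn4 /=; ring.
Qed.

Lemma perm_symbol_contract (a b q k u v : 'I_4) :
  \sum_p perm_symbol R a b p q * perm_symbol R p k u v = kdelta3 a b q k u v.
Proof.
have intr_eq (x y : 'I_4) : (((x : nat) == y)%:R : int)%:~R = (x == y)%:R :> R.
  by have -> : ((x : nat) == y) = (x == y) by []; case: (x == y).
transitivity ((kdelta3 (a : nat) b q k u v : int)%:~R : R).
  rewrite -sgn4_contract (big_morph _ (@intrD R) (mulr0z 1)).
  by apply: eq_bigr => p _; rewrite intrM !perm_symbolE.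
by rewrite /kdelta3 /kdelta2 !(intrD, intrN, intrM) !intr_eq.
Qed.

End PermSymbol.

Section Determinant.
Variable R : rcfType.

Lemma expand_det_row_delta n (A : 'M[R]_n) (i : 'I_n) :
  \det A = \sum_m A i m *
    \det (\matrix_(a, b) if a == i then (m == b)%:R else A a b).
Proof.
rewrite (expand_det_row A i); apply: eq_bigr => m _; congr (_ * _).
rewrite (expand_det_row _ i) (bigD1 m) //= big1 ?addr0; last first.
  by move=> j /negPf neq_jm; rewrite mxE eqxx eq_sym neq_jm mul0r.
rewrite mxE !eqxx mul1r /cofactor; congr (_ * \det _).
by apply/matrixP => x y; rewrite !mxE eq_sym (negPf (neq_lift _ _)).
Qed.

Lemma det_perm_symbol (A : 'M[R]_4) :
  \det A = \sum_m \sum_k \sum_r \sum_s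
    A 0 m * A 1 k * A 2 r * A 3 s * perm_symbol R m k r s.
Proof.
rewrite (expand_det_row_delta A 0); apply: eq_bigr => m _.
rewrite (expand_det_row_delta _ 1) mulr_sumr; apply: eq_bigr => k _.
rewrite (expand_det_row_delta _ 2) !mulr_sumr; apply: eq_bigr => r _.
rewrite (expand_det_row_delta _ 3) !mulr_sumr; apply: eq_bigr => s _.
rewrite !mxE /= !mulrA /perm_symbol; congr (_ * \det _).
by apply/matrixP => x y; rewrite !mxE; case: x => [[|[|[|[|//]]]] ?].
Qed.

Lemma perm_symbol_transform (A : 'M[R]_4) (p n u v : 'I_4) :
  \sum_m \sum_k \sum_r \sum_s
    A p m * A n k * A u r * A v s * perm_symbol R m k r s
  = \det A * perm_symbol R p n u v.
Proof.
set E := \matrix_(i, j) ((idx4 p n u v i == j)%:R : R).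
have rowE i m : (E *m A) i m = A (idx4 p n u v i) m.
  by rewrite mxE (eq_bigr (fun j => (idx4 p n u v i == j)%:R * A j m))
    ?sum_delta_l // => j _; rewrite mxE.
rewrite mulrC -[perm_symbol _ _ _ _ _]/(\det E) -det_mulmx det_perm_symbol.
by do 4 (apply: eq_bigr => ? _); rewrite !rowE.
Qed.

End Determinant.

Lemma exchange_big_pair (R : nmodType) (I : finType) (F : I -> I -> I -> I -> R) :
  \sum_i \sum_j \sum_k \sum_l F i j k l = \sum_k \sum_l \sum_i \sum_j F i j k l.
Proof.
under eq_bigr => i _ do rewrite exchange_big.
under eq_bigr => i _ do under eq_bigr => k _ do rewrite exchange_big.
by rewrite exchange_big; apply: eq_bigr => k _; rewrite exchange_big.
Qed.

Lemma mulr_sum2 (R : pzSemiRingType) (I : finType) (F : I -> I -> R) c :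
  c * \sum_i \sum_j F i j = \sum_i \sum_j c * F i j.
Proof. by rewrite big_distrr; apply: eq_bigr => i _; rewrite big_distrr. Qed.

Lemma lorentzian_det_lt0 (R : rcfType) (g : 'M[R]_4) :
  lorentzian g -> \det g < 0.
Proof.
case=> _ [P [P_unit diagE]].
have detP_sq_gt0 : 0 < \det P ^+ 2.
  by rewrite exprn_even_gt0 //= -unitfE -unitmxE.
have : \det P ^+ 2 * \det g = -1.
  have := congr1 determinant diagE.
  rewrite !det_mulmx det_tr det_diag !big_ord_recl big_ord0 !mxE /= => detE.
  by transitivity (\det P * \det g * \det P); [ring | rewrite detE; ring].
move=> detPg; rewrite ltNge; apply/negP => det_ge0.
by have := mulr_ge0 (ltW detP_sq_gt0) det_ge0; rewrite detPg ler0N1.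
Qed.

Definition hodge (R : rcfType) (g : 'M[R]_4) (F : tensor2 R) : tensor2 R :=
  fun a b => 2^-1 * \sum_p \sum_q epsLLUU g a b p q * F p q.

Definition electric (R : rcfType) (g : 'M[R]_4) (F : tensor2 R) (t : 'I_4 -> R)
    (p : 'I_4) : R :=
  \sum_m \sum_n ginv g p m * F m n * t n.

Definition magnetic (R : rcfType) (g : 'M[R]_4) (F : tensor2 R) (t : 'I_4 -> R)
    (p : 'I_4) : R :=
  - electric g (hodge g F) t p.

Definition lower (R : rcfType) (g : 'M[R]_4) (t : 'I_4 -> R) (a : 'I_4) : R :=
  \sum_n g a n * t n.

Section Metric.
Variables (R : rcfType) (g : 'M[R]_4) (t : 'I_4 -> R).
Hypotheses (g_tr : g^T = g) (det_g_lt0 : \det g < 0).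

Lemma g_sym i j : g i j = g j i.
Proof. by rewrite -{1}g_tr mxE. Qed.

Lemma g_unitmx : g \in unitmx.
Proof. by rewrite unitmxE unitfE ltr0_neq0. Qed.

Lemma ginv_sym i j : ginv g i j = ginv g j i.
Proof. by rewrite /ginv -{2}g_tr -trmx_inv mxE. Qed.

Lemma mul_g_ginv i j : \sum_k g i k * ginv g k j = (i == j)%:R.
Proof.
by have := congr1 (fun M : 'M[R]_4 => M i j) (mulmxV g_unitmx); rewrite !mxE.
Qed.

Lemma sqr_sqrt_det_ginv : Num.sqrt (- \det g) ^+ 2 * \det (ginv g) = -1.
Proof.
rewrite sqr_sqrtr ?oppr_ge0 ?ltW // /ginv det_inv mulNr mulfV //.
exact: ltr0_neq0.
Qed.

Lemma perm_symbol_raise (p n u v : 'I_4) :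
  \sum_m \sum_r \sum_s
    ginv g p m * perm_symbol R m n r s * ginv g r u * ginv g s v
  = \det (ginv g) * \sum_k g n k * perm_symbol R p k u v.
Proof.
set G := ginv g.
pose F m a := \sum_r \sum_s G p m * G u r * G v s * perm_symbol R m a r s.
transitivity (\sum_m \sum_a (n == a)%:R * F m a).
  apply: eq_bigr => m _; rewrite sum_delta_l.
  by do 2 (apply: eq_bigr => ? _); rewrite /G (ginv_sym _ u) (ginv_sym _ v); ring.
rewrite [RHS]big_distrr /=; under [RHS]eq_bigr => k _ do
  rewrite mulrCA -perm_symbol_transform big_distrr /=.
rewrite [RHS]exchange_big; apply: eq_bigr => m _ /=.
transitivity (\sum_a \sum_k g n k * G k a * F m a).
  by apply: eq_bigr => a _; rewrite -big_distrl mul_g_ginv.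
rewrite exchange_big; apply: eq_bigr => k _; rewrite [RHS]big_distrr /=.
apply: eq_bigr => a _; rewrite /F !big_distrr /=; apply: eq_bigr => r _.
by rewrite !big_distrr /=; apply: eq_bigr => s _; ring.
Qed.

Lemma epsL_contract (a b q n u v : 'I_4) :
  \sum_p epsL g a b p q * \sum_m ginv g p m * epsLLUU g m n u v
  = - (g n a * kdelta2 b q u v - g n b * kdelta2 a q u v
       + g n q * kdelta2 a b u v).
Proof.
have raised p : \sum_m ginv g p m * epsLLUU g m n u v
    = Num.sqrt (- \det g) * (\det (ginv g) * \sum_k g n k * perm_symbol R p k u v).
  rewrite -perm_symbol_raise !big_distrr /=; apply: eq_bigr => m _.
  rewrite !big_distrr /=; apply: eq_bigr => r _.
  by rewrite !big_distrr /=; apply: eq_bigr => w _; rewrite /epsL; ring.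
under eq_bigr => p _ do rewrite raised.
transitivity (Num.sqrt (- \det g) ^+ 2 * \det (ginv g) *
    \sum_k g n k * \sum_p perm_symbol R a b p q * perm_symbol R p k u v).
  transitivity (\sum_p \sum_k Num.sqrt (- \det g) ^+ 2 * \det (ginv g) * g n k *
      (perm_symbol R a b p q * perm_symbol R p k u v)).
    apply: eq_bigr => p _; do 3 rewrite big_distrr /=.
    by apply: eq_bigr => k _; rewrite /epsL; ring.
  rewrite exchange_big [RHS]big_distrr /=; apply: eq_bigr => k _.
  by rewrite !big_distrr /=; apply: eq_bigr => p _; ring.
rewrite sqr_sqrt_det_ginv mulN1r; congr (- _).
under eq_bigr => k _ do rewrite perm_symbol_contract.
transitivity (\sum_k ((a == k)%:R * (g n k * kdelta2 b q u v)
    - (b == k)%:R * (g n k * kdelta2 a q u v)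
    + (q == k)%:R * (g n k * kdelta2 a b u v))).
  by apply: eq_bigr => k _; rewrite /kdelta3; ring.
by rewrite big_split sumrB /= !sum_delta_l.
Qed.

Lemma eq_electric (F F' : tensor2 R) p :
  (forall m n, F m n = F' m n) -> electric g F t p = electric g F' t p.
Proof.
by move=> eqF; apply: eq_bigr => m _; apply: eq_bigr => n _; rewrite eqF.
Qed.

Lemma eq_hodge (F F' : tensor2 R) a b :
  (forall m n, F m n = F' m n) -> hodge g F a b = hodge g F' a b.
Proof.
by move=> eqF; congr (_ * _); apply: eq_bigr => m _; apply: eq_bigr => n _;
  rewrite eqF.
Qed.

Lemma eq_magnetic (F F' : tensor2 R) p :
  (forall m n, F m n = F' m n) -> magnetic g F t p = magnetic g F' t p.
Proof. by move=> eqF; congr (- _); apply: eq_electric => m n; exact: eq_hodge. Qed.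

Lemma electricN (F : tensor2 R) p :
  electric g (fun m n => - F m n) t p = - electric g F t p.
Proof.
rewrite /electric -sumrN; apply: eq_bigr => m _.
by rewrite -sumrN; apply: eq_bigr => n _; ring.
Qed.

Lemma hodgeN (F : tensor2 R) a b : hodge g (fun m n => - F m n) a b = - hodge g F a b.
Proof.
rewrite /hodge -mulrN -sumrN; congr (_ * _); apply: eq_bigr => m _.
by rewrite -sumrN; apply: eq_bigr => n _; ring.
Qed.

Lemma magneticN (F : tensor2 R) p :
  magnetic g (fun m n => - F m n) t p = - magnetic g F t p.
Proof. by rewrite /magnetic (eq_electric _ (hodgeN F)) electricN. Qed.

Lemma raise2N (T : tensor2 R) p r :
  raise2 g (fun a c => - T a c) p r = - raise2 g T p r.
Proof.
rewrite /raise2 -sumrN; apply: eq_bigr => a _.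
by rewrite -sumrN; apply: eq_bigr => c _; ring.
Qed.

Lemma electric_electric (Y : tensor4 R) p r :
  electric g (fun u v => electric g (fun m n => Y m n u v) t p) t r
  = raise2 g (contract_t Y t) p r.
Proof.
rewrite /electric /raise2 /contract_t.
transitivity (\sum_a \sum_b \sum_c \sum_d
    ginv g p a * ginv g r c * (Y a b c d * t b * t d)).
  rewrite -exchange_big_pair; apply: eq_bigr => c _; apply: eq_bigr => d _.
  rewrite big_distrr big_distrl /=; apply: eq_bigr => a _.
  by rewrite big_distrr big_distrl /=; apply: eq_bigr => b _; ring.
apply: eq_bigr => a _; rewrite exchange_big; apply: eq_bigr => c _.
by rewrite mulr_sum2.
Qed.

Lemma hodge_electric (Y : tensor4 R) p c d :
  hodge g (fun u v => electric g (fun m n => Y m n u v) t p) c d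
  = electric g (fun m n => hodge g (Y m n) c d) t p.
Proof.
rewrite /hodge /electric.
transitivity (\sum_u \sum_v \sum_m \sum_n
    2^-1 * epsLLUU g c d u v * (ginv g p m * Y m n u v * t n)).
  rewrite mulr_sum2; apply: eq_bigr => u _; apply: eq_bigr => v _.
  by rewrite mulrA mulr_sum2.
rewrite exchange_big_pair; apply: eq_bigr => m _; apply: eq_bigr => n _.
by rewrite [RHS]mulrC !mulrA mulr_sum2; do 2 (apply: eq_bigr => ? _); ring.
Qed.

Lemma double_dualE (X : tensor4 R) a b c d :
  double_dual g X a b c d = hodge g (left_dual g X a b) c d.
Proof.
rewrite /double_dual /hodge /left_dual mulr_sum2 [RHS]mulr_sum2.
under eq_bigr => p _ do under eq_bigr => q _ do rewrite mulr_sum2.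
under [RHS]eq_bigr => u _ do under eq_bigr => v _ do rewrite !mulrA mulr_sum2.
rewrite exchange_big_pair; do 4 (apply: eq_bigr => ? _).
by field.
Qed.

Section TwoForm.
Variable F : tensor2 R.

Lemma lower_electric i : \sum_p g i p * electric g F t p = \sum_n F i n * t n.
Proof.
transitivity (\sum_m (i == m)%:R * \sum_n F m n * t n); last exact: sum_delta_l.
under [RHS]eq_bigr => m _ do rewrite -mul_g_ginv big_distrl /=.
rewrite [RHS]exchange_big; apply: eq_bigr => p _; rewrite big_distrr /=.
apply: eq_bigr => m _; rewrite !big_distrr /=.
by apply: eq_bigr => n _; ring.
Qed.

Lemma g4_electric a b :
  \sum_p \sum_q g4 g a b p q * electric g F t p * t q
  = (\sum_n F a n * t n) * lower g t b - lower g t a * \sum_n F b n * t n.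
Proof.
rewrite -!lower_electric /lower !big_distrlr /= [X in _ - X]exchange_big -sumrB.
by apply: eq_bigr => p _; rewrite -sumrB; apply: eq_bigr => q _; rewrite /g4; ring.
Qed.

Hypothesis F_anti : forall u v, F u v = - F v u.

Lemma epsL_hodge a b q n :
  \sum_p epsL g a b p q * \sum_m ginv g p m * hodge g F m n
  = - (g n a * F b q - g n b * F a q + g n q * F a b).
Proof.
transitivity (\sum_p \sum_m \sum_u \sum_v
    2^-1 * F u v * (epsL g a b p q * (ginv g p m * epsLLUU g m n u v))).
  apply: eq_bigr => p _; rewrite big_distrr /=; apply: eq_bigr => m _.
  by rewrite /hodge !mulrA mulr_sum2; do 2 (apply: eq_bigr => ? _); ring.
transitivity (2^-1 * \sum_u \sum_v F u v *
    \sum_p epsL g a b p q * \sum_m ginv g p m * epsLLUU g m n u v).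
  rewrite exchange_big_pair mulr_sum2; apply: eq_bigr => u _; apply: eq_bigr => v _.
  rewrite mulrA [RHS]big_distrr /=; apply: eq_bigr => p _.
  by rewrite [RHS]mulrA [RHS]big_distrr /=; apply: eq_bigr => m _; ring.
under eq_bigr => u _ do under eq_bigr => v _ do rewrite epsL_contract.
set kd := @kdelta2 'I_4 R.
have -> : \sum_u \sum_v F u v *
      - (g n a * kd b q u v - g n b * kd a q u v + g n q * kd a b u v)
    = - (g n a * (\sum_u \sum_v F u v * kd b q u v)
         - g n b * (\sum_u \sum_v F u v * kd a q u v)
         + g n q * (\sum_u \sum_v F u v * kd a b u v)).
  rewrite !mulr_sum2 -!sumrB -big_split /= -sumrN; apply: eq_bigr => u _.
  by rewrite -!sumrB -big_split /= -sumrN; apply: eq_bigr => v _; ring.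
rewrite !sum_kdelta2 (F_anti q b) (F_anti q a) (F_anti b a).
by field.
Qed.

Lemma epsL_magnetic a b :
  \sum_p \sum_q epsL g a b p q * magnetic g F t p * t q
  = lower g t a * (\sum_n F b n * t n) - lower g t b * (\sum_n F a n * t n)
    + tsq g t * F a b.
Proof.
have magneticE p : magnetic g F t p
    = - \sum_n t n * \sum_m ginv g p m * hodge g F m n.
  rewrite /magnetic /electric exchange_big; congr (- _); apply: eq_bigr => n _.
  by rewrite big_distrr; apply: eq_bigr => m _ /=; ring.
transitivity (\sum_n \sum_q t n * t q *
    - (\sum_p epsL g a b p q * \sum_m ginv g p m * hodge g F m n)).
  under eq_bigr => p _ do under eq_bigr => q _ do
    rewrite magneticE mulrN mulNr big_distrr big_distrl /= -sumrN.
  rewrite exchange_big; under eq_bigr => q _ do rewrite exchange_big.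
  rewrite exchange_big; apply: eq_bigr => n _; apply: eq_bigr => q _.
  by rewrite mulrN big_distrr -sumrN; apply: eq_bigr => p _ /=; ring.
under eq_bigr => n _ do under eq_bigr => q _ do rewrite epsL_hodge opprK.
rewrite /lower /tsq !big_distrlr /= [_ * F a b]mulrC mulr_sum2.
rewrite -sumrB -big_split /=; apply: eq_bigr => n _.
by rewrite -sumrB -big_split /=; apply: eq_bigr => q _; rewrite !(g_sym n); ring.
Qed.

Lemma two_form_decomposition a b :
  tsq g t * F a b
  = \sum_p \sum_q (g4 g a b p q * electric g F t p
                    + epsL g a b p q * magnetic g F t p) * t q.
Proof.
transitivity (\sum_p \sum_q g4 g a b p q * electric g F t p * t q
    + \sum_p \sum_q epsL g a b p q * magnetic g F t p * t q).
  by rewrite g4_electric epsL_magnetic; ring.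
rewrite -big_split; apply: eq_bigr => p _.
by rewrite -big_split; apply: eq_bigr => q _ /=; ring.
Qed.

End TwoForm.

Section DoubleForm.
Variable X : tensor4 R.
Hypotheses (X_anti12 : forall a b c d, X a b c d = - X b a c d)
           (X_anti34 : forall a b c d, X a b c d = - X a b d c).

Lemma electric_decomposition p c d :
  tsq g t * electric g (fun m n => X m n c d) t p
  = \sum_r \sum_s (g4 g c d r s * raise2 g (frakA g X t) p r
                    + epsL g c d r s * raise2 g (frakB g X t) p r) * t s.
Proof.
have anti u v : electric g (fun m n => X m n u v) t p
    = - electric g (fun m n => X m n v u) t p.
  by rewrite -electricN; apply: eq_electric => m n; exact: X_anti34.
rewrite (two_form_decomposition anti); apply: eq_bigr => r _; apply: eq_bigr => s _.
rewrite electric_electric /magnetic (eq_electric _ (hodge_electric X p)).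
by rewrite electric_electric raise2N.
Qed.

Lemma magnetic_decomposition p c d :
  tsq g t * magnetic g (fun m n => X m n c d) t p
  = \sum_r \sum_s (g4 g c d r s * raise2 g (frakC g X t) p r
                    + epsL g c d r s * raise2 g (frakD g X t) p r) * t s.
Proof.
have anti u v : magnetic g (fun m n => X m n u v) t p
    = - magnetic g (fun m n => X m n v u) t p.
  by rewrite -magneticN; apply: eq_magnetic => m n; exact: X_anti34.
rewrite (two_form_decomposition anti); apply: eq_bigr => r _; apply: eq_bigr => s _.
congr ((_ * _ + _ * _) * _).
  by rewrite /magnetic electricN electric_electric raise2N.
rewrite /magnetic (eq_electric _ (hodgeN _)) electricN opprK.
rewrite (eq_electric _ (hodge_electric _ p)) electric_electric.
rewrite /raise2 /contract_t; do 2 (apply: eq_bigr => ? _); congr (_ * _).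
by do 2 (apply: eq_bigr => ? _); rewrite double_dualE.
Qed.

Lemma double_form_decomposition a b c d :
  tsq g t ^+ 2 * X a b c d
  = \sum_p \sum_q \sum_r \sum_s
      (g4 g a b p q * (g4 g c d r s * raise2 g (frakA g X t) p r
                       + epsL g c d r s * raise2 g (frakB g X t) p r)
       + epsL g a b p q * (g4 g c d r s * raise2 g (frakC g X t) p r
                           + epsL g c d r s * raise2 g (frakD g X t) p r))
      * t q * t s.
Proof.
have anti u v : X u v c d = - X v u c d by exact: X_anti12.
rewrite expr2 -mulrA (two_form_decomposition anti) mulr_sum2.
apply: eq_bigr => p _; apply: eq_bigr => q _.
transitivity ((g4 g a b p q * (tsq g t * electric g (fun m n => X m n c d) t p)
    + epsL g a b p q * (tsq g t * magnetic g (fun m n => X m n c d) t p)) * t q).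
  by ring.
rewrite electric_decomposition magnetic_decomposition !mulr_sum2 -big_split.
rewrite big_distrl /=; apply: eq_bigr => r _.
by rewrite -big_split big_distrl /=; apply: eq_bigr => s _; ring.
Qed.

End DoubleForm.

End Metric.

Theorem mainTheorem6 (R : rcfType) (g : 'M[R]_4)
  (X : 'I_4 -> 'I_4 -> 'I_4 -> 'I_4 -> R) (t : 'I_4 -> R) :
  lorentzian g -> double_form X -> tsq g t != 0 ->
  forall a b c d : 'I_4,
    X a b c d =
      (\sum_(p < 4) \sum_(q < 4) \sum_(r < 4) \sum_(s < 4)
         (g4 g a b p q * (g4 g c d r s * raise2 g (frakA g X t) p r
                          + epsL g c d r s * raise2 g (frakB g X t) p r)
          + epsL g a b p q * (g4 g c d r s * raise2 g (frakC g X t) p r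
                          + epsL g c d r s * raise2 g (frakD g X t) p r))
         * t q * t s)
      / (tsq g t ^+ 2).
Proof.
move=> lor [X_anti12 X_anti34] tsq_neq0 a b c d.
have [g_tr _] := lor.
rewrite -(double_form_decomposition t g_tr (lorentzian_det_lt0 lor) X_anti12 X_anti34).
by rewrite mulrC mulKf // expf_neq0.
Qed.
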